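(* Consider a finite stochastic partial monitoring game with $N$ actions, $M$ outcomes and $A$ symbols, given by a loss matrix $L=(l_{i,j})\in\mathbb{R}^{N\times M}$, a feedback matrix $H=(h_{i,j})\in[A]^{N\times M}$ and an opponent strategy $p^*\in\mathcal{P}_M$, assumed globally observable and such that action $1$ is the unique optimal action under $p^*$. Let $p^*_i=S_ip^*$ for $i\in[N]$. Then any strongly consistent algorithm satisfies, for all sufficiently large $T$, $$\forall q\in\mathcal{C}_1^c:\quad \sum_{i\in[N]}\mathbb{E}[N_i(T)]\,D(p^*_i\,\Vert\,S_iq)\ \ge\ \log T-\mathrm{o}(\log T).$$
   Context: Game: at each round $t=1,\dots,T$ the learner chooses an action $i(t)\in[N]$ and the opponent's outcome $j(t)\in[M]$ is drawn i.i.d. from $p^*\in\mathcal{P}_M$ (the set of probability distributions on $[M]$); the learner knows $L,H$, suffers the unobserved loss $l_{i(t),j(t)}$ and observes only the symbol $h_{i(t),j(t)}\in[A]$, where $[A]=\{1,\dots,A\}$. $L_i$ denotes the $i$-th row of $L$. Action $1$ is optimal: $1=\arg\min_i L_i^\top p^*$ uniquely. $\Delta_i=(L_i-L_1)^\top p^*$; $N_i(t)$ is the number of rounds before round $t$ in which action $i$ was selected; the regret is $\mathrm{Regret}(T)=\sum_{t=1}^T\Delta_{i(t)}$. Signal matrix: $S_i\in\{0,1\}^{A\times M}$ with $(S_i)_{k,j}=1$ iff $h_{i,j}=k$, so $S_iq$ is the distribution of observed symbols when playing $i$ under outcome distribution $q$. Optimality cell: $\mathcal{C}_i=\{q\in\mathcal{P}_M:\forall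 j\neq i,\ (L_i-L_j)^\top q\le 0\}$, and $\mathcal{C}_i^c=\mathcal{P}_M\setminus\mathcal{C}_i$. $D(p\Vert q)=\sum_k p_k\log(p_k/q_k)$ is the KL divergence of discrete distributions with $0\log(0/0)=0$. Global observability: for all pairs $i,j$, $L_i-L_j\in\bigoplus_{k\in[N]}\mathrm{Im}\,S_k^\top$. An algorithm is strongly consistent if $\mathbb{E}[\mathrm{Regret}(T)]=\mathrm{o}(T^a)$ for every $a>0$ and every opponent strategy $p\in\mathcal{P}_M$ (with $L,H$ fixed). *)

From mathcomp Require Import all_boot all_order all_algebra.
From mathcomp Require Import boolp classical_sets reals ereal exp.
Set Implicit Arguments. Unset Strict Implicit. Unset Printing Implicit Defensive.
Import Order.TTheory GRing.Theory Num.Theory.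
Local Open Scope ring_scope.

Definition is_dist (R : realType) (n : nat) (p : 'I_n -> R) : Prop :=
  (forall j, 0 <= p j) /\ \sum_j p j = 1.

Definition loss (R : realType) (N M : nat) (L : 'M[R]_(N, M)) (i : 'I_N)
  (q : 'I_M -> R) : R := \sum_j L i j * q j.

Definition gap (R : realType) (N M : nat) (L : 'M[R]_(N, M)) (p : 'I_M -> R)
  (i : 'I_N) : R := \big[Num.max/0]_k (loss L i p - loss L k p).

Definition sigmat (R : realType) (N M A : nat) (H : 'I_N -> 'I_M -> 'I_A)
  (i : 'I_N) : 'M[R]_(A, M) := \matrix_(k, j) (H i j == k)%:R.

Definition obs_dist (R : realType) (N M A : nat) (H : 'I_N -> 'I_M -> 'I_A)
  (i : 'I_N) (q : 'I_M -> R) : 'I_A -> R :=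
  fun k => \sum_j sigmat R H i k j * q j.

Definition in_cell (R : realType) (N M : nat) (L : 'M[R]_(N, M)) (i : 'I_N)
  (q : 'I_M -> R) : Prop :=
  is_dist q /\ forall j, j != i -> loss L i q - loss L j q <= 0.

Definition in_cell_compl (R : realType) (N M : nat) (L : 'M[R]_(N, M))
  (i : 'I_N) (q : 'I_M -> R) : Prop := is_dist q /\ ~ in_cell L i q.

Definition globally_observable (R : realType) (N M A : nat)
  (L : 'M[R]_(N, M)) (H : 'I_N -> 'I_M -> 'I_A) : Prop :=
  forall i j : 'I_N, exists v : 'I_N -> 'cV[R]_A,
    (row i L - row j L)^T = \sum_k (sigmat R H k)^T *m v k.

(* KL divergence in extended reals, with 0 log(0/q) = 0 and p log(p/0) = +oo *)
Definition KL (R : realType) (n : nat) (p q : 'I_n -> R) : \bar R :=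
  if [exists k, (0 < p k) && (q k == 0)] then +oo%E
  else (\sum_(k | 0 < p k) p k * ln (p k / q k))%:E.

(* A (possibly randomized, anytime) algorithm: a behavior strategy mapping the
   observed history (past actions and observed symbols) to a distribution
   over actions. *)
Definition policy (R : realType) (N A : nat) :=
  seq ('I_N * 'I_A) -> 'I_N -> R.

Definition valid_policy (R : realType) (N A : nat) (pol : policy R N A) : Prop :=
  forall h, is_dist (pol h).

Definition hist_of (N M A : nat) (H : 'I_N -> 'I_M -> 'I_A)
  (s : seq ('I_N * 'I_M)) : seq ('I_N * 'I_A) :=
  [seq (x.1, H x.1 x.2) | x <- s].

Definition traj_prob (R : realType) (N M A : nat) (H : 'I_N -> 'I_M -> 'I_A)
  (pol : policy R N A) (p : 'I_M -> R) (n : nat)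
  (tr : n.-tuple ('I_N * 'I_M)) : R :=
  \prod_(t < n) (pol (hist_of H (take t tr)) (tnth tr t).1 * p (tnth tr t).2).

Definition ENcount (R : realType) (N M A : nat) (H : 'I_N -> 'I_M -> 'I_A)
  (pol : policy R N A) (p : 'I_M -> R) (n : nat) (i : 'I_N) : R :=
  \sum_(tr : n.-tuple ('I_N * 'I_M))
     traj_prob H pol p tr * (count (fun x => x.1 == i) tr)%:R.

Definition Eregret (R : realType) (N M A : nat) (L : 'M[R]_(N, M))
  (H : 'I_N -> 'I_M -> 'I_A) (pol : policy R N A) (p : 'I_M -> R) (T : nat) : R :=
  \sum_i ENcount H pol p T i * gap L p i.

Definition strongly_consistent (R : realType) (N M A : nat) (L : 'M[R]_(N, M))
  (H : 'I_N -> 'I_M -> 'I_A) (pol : policy R N A) : Prop :=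
  forall p : 'I_M -> R, is_dist p ->
  forall a : R, 0 < a -> forall eps : R, 0 < eps ->
  exists T0 : nat, forall T : nat, (T0 <= T)%N ->
    Eregret L H pol p T <= eps * (T%:R `^ a).

(* Compare the laws of the observed history under [pstar] and under [q].
   Since the outcome never depends on the past, the expected log-likelihood
   ratio after [n] rounds is [- sum_i E[N_i] D(pstar_i || S_i q)].  Test the
   event "action [i1] is played in more than half of the rounds": strong
   consistency makes it almost sure under [pstar], where [i1] is the unique
   optimal action, and of probability at most [n^(a-1)] under [q], for which
   [i1] is suboptimal.  A change of measure (Jensen's inequality on the event)
   turns these two estimates into [D >= (1 - a) ln n - O(1)] for every [a > 0]. *)

From mathcomp Require Import all_boot all_order all_algebra.
From mathcomp Require Import boolp classical_sets reals ereal sequences exp.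
From mathcomp Require Import ring lra.
Set Implicit Arguments. Unset Strict Implicit. Unset Printing Implicit Defensive.
Import Order.TTheory GRing.Theory Num.Theory.
Local Open Scope ring_scope.

Lemma jensen_expR (R : realType) (I : finType) (w l : I -> R) :
  (forall k, 0 <= w k) -> 0 < \sum_k w k ->
  (\sum_k w k) * expR ((\sum_k w k * l k) / \sum_k w k) <=
  \sum_k w k * expR (l k).
Proof.
move=> w_ge0 W_gt0; set W := \sum_k w k; set m := (\sum_k w k * l k) / W.
(* [expR] lies above its tangent at the weighted mean [m]. *)
have shift k : w k * expR (l k) = expR m * (w k * expR (l k - m)).
  by rewrite mulrCA -expRD addrC subrK.
under [X in _ <= X]eq_bigr do rewrite shift.
rewrite -mulr_sumr mulrC; apply: ler_wpM2l; first exact/ltW/expR_gt0.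
apply: (@le_trans _ _ (\sum_k w k * (1 + (l k - m)))); last first.
  by apply: ler_sum => k _; apply: ler_wpM2l => //; exact: expR_ge1Dx.
rewrite (eq_bigr (fun k => w k + (w k * l k - w k * m))); last first.
  by move=> k _; rewrite mulrDr mulr1 mulrBr.
rewrite big_split /= sumrB -mulr_suml.
by rewrite -/W /m mulrC divfK ?subrr ?addr0 // gt_eqF.
Qed.

Lemma big_tuple_rcons (V : nmodType) (T : finType) n (F : n.+1.-tuple T -> V) :
  \sum_(t : n.+1.-tuple T) F t =
  \sum_(t : n.-tuple T) \sum_(x : T) F (rcons_tuple t x).
Proof.
rewrite pair_bigA /=.
have rcons_bij : bijective (fun p : n.-tuple T * T => rcons_tuple p.1 p.2).
  apply: inj_card_bij; last by rewrite card_prod !card_tuple expnS mulnC.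
  by move=> [s x] [t y] /(congr1 val) /rcons_inj [/val_inj -> ->].
by rewrite (reindex _ (onW_bij _ rcons_bij)).
Qed.

Definition KLr (R : realType) n (p q : 'I_n -> R) : R :=
  \sum_(k | 0 < p k) p k * ln (p k / q k).

Definition dominated (R : realType) n (p q : 'I_n -> R) : bool :=
  [forall k, (0 < p k) ==> (q k != 0)].

Lemma KLE (R : realType) n (p q : 'I_n -> R) :
  KL p q = if dominated p q then (KLr p q)%:E else +oo%E.
Proof.
have -> : dominated p q = ~~ [exists k, (0 < p k) && (q k == 0)].
  by rewrite negb_exists; apply/eq_forallb => k; rewrite negb_and implybE.
by rewrite /KL; case: ifP.
Qed.

(** * Trajectories of the game *)

Section Trajectories.
Variables (R : realType) (N M A : nat) (H : 'I_N -> 'I_M -> 'I_A).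
Variable pol : policy R N A.
Hypothesis pol_valid : valid_policy pol.

Local Notation X := ('I_N * 'I_M)%type.
Local Notation tp := (traj_prob H pol).
Local Notation EN := (ENcount H pol).

Definition step_prob (p : 'I_M -> R) (h : seq ('I_N * 'I_A)) (x : X) : R :=
  pol h x.1 * p x.2.

Lemma step_prob_ge0 p h x : is_dist p -> 0 <= step_prob p h x.
Proof. by move=> [p_ge0 _]; rewrite mulr_ge0 // (proj1 (pol_valid h)). Qed.

Lemma sum_step_prob p h : is_dist p -> \sum_x step_prob p h x = 1.
Proof.
move=> [_ p_sum1]; rewrite -(pair_bigA _ (fun a j => pol h a * p j)) /=.
rewrite -[RHS](proj2 (pol_valid h)); apply: eq_bigr => a _.
by rewrite -mulr_sumr p_sum1 mulr1.
Qed.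

Lemma traj_prob_rcons p n (tr : n.-tuple X) x :
  tp p (rcons_tuple tr x) = tp p tr * step_prob p (hist_of H tr) x.
Proof.
rewrite /traj_prob big_ord_recr /=; congr (_ * _).
  apply: eq_bigr => t _; have t_le : (t <= size tr)%N by rewrite size_tuple ltnW.
  by rewrite !(tnth_nth x) /= -cats1 takel_cat // nth_cat size_tuple ltn_ord.
rewrite !(tnth_nth x) /= -cats1 takel_cat ?size_tuple //.
by rewrite -{1}(size_tuple tr) take_size nth_cat size_tuple ltnn subnn.
Qed.

Lemma traj_prob_ge0 p n (tr : n.-tuple X) : is_dist p -> 0 <= tp p tr.
Proof.
move=> [p_ge0 _]; apply: prodr_ge0 => t _.
by rewrite mulr_ge0 // (proj1 (pol_valid _)).
Qed.

Lemma sum_traj_probS p n (F : n.+1.-tuple X -> R) :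
  \sum_tr tp p tr * F tr =
  \sum_(tr : n.-tuple X)
     tp p tr * \sum_x step_prob p (hist_of H tr) x * F (rcons_tuple tr x).
Proof.
rewrite big_tuple_rcons; apply: eq_bigr => tr _; rewrite mulr_sumr.
by apply: eq_bigr => x _; rewrite traj_prob_rcons mulrA.
Qed.

Lemma sum_traj_prob p n : is_dist p -> \sum_(tr : n.-tuple X) tp p tr = 1.
Proof.
move=> p_dist; elim: n => [|n IH].
  rewrite (eq_bigr (fun _ => 1)) => [|tr _]; last by rewrite /traj_prob big_ord0.
  by rewrite sumr_const card_tuple expn0.
rewrite (eq_bigr (fun tr => tp p tr * 1)) => [|tr _]; last by rewrite mulr1.
rewrite sum_traj_probS -[RHS]IH; apply: eq_bigr => tr _.
under eq_bigr do rewrite mulr1.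
by rewrite sum_step_prob // mulr1.
Qed.

Lemma ENcount_ge0 p n i : is_dist p -> 0 <= EN p n i.
Proof.
by move=> p_dist; apply: sumr_ge0 => tr _; rewrite mulr_ge0 ?traj_prob_ge0.
Qed.

Lemma expect_countS p n (c : pred X) : is_dist p ->
  \sum_(tr : n.+1.-tuple X) tp p tr * (count c tr)%:R =
  \sum_(tr : n.-tuple X) tp p tr * (count c tr)%:R +
  \sum_(tr : n.-tuple X) tp p tr * \sum_x step_prob p (hist_of H tr) x * (c x)%:R.
Proof.
move=> p_dist; rewrite sum_traj_probS -big_split /=; apply: eq_bigr => tr _.
rewrite -mulrDr; congr (_ * _).
under eq_bigr do rewrite /= -cats1 count_cat /= addn0 natrD mulrDr.
by rewrite big_split /= -mulr_suml sum_step_prob // mul1r.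
Qed.

Lemma expect_count_pair p n (x0 : X) : is_dist p ->
  \sum_(tr : n.-tuple X) tp p tr * (count_mem x0 tr)%:R = EN p n x0.1 * p x0.2.
Proof.
move=> p_dist; rewrite /ENcount; elim: n => [|n IH].
  rewrite !big1 ?mul0r // => tr _; by rewrite (size0nil (size_tuple tr)) mulr0.
rewrite expect_countS // IH (expect_countS _ (fun x : X => x.1 == x0.1)) //.
rewrite mulrDl; congr (_ + _); rewrite mulr_suml; apply: eq_bigr => tr _.
rewrite -mulrA; congr (_ * _); set h := hist_of H tr.
rewrite (bigD1 x0) //= eqxx mulr1 big1 ?addr0 => [|y /negbTE ->]; last first.
  by rewrite mulr0.
rewrite /step_prob -(pair_bigA _ (fun a j => pol h a * p j * (a == x0.1)%:R)) /=.
rewrite (bigD1 x0.1) //= [X in _ + X]big1 => [|a /negbTE a_neq]; last first.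
  by apply: big1 => j _; rewrite a_neq mulr0.
rewrite addr0 eqxx; under eq_bigr do rewrite mulr1.
by rewrite -mulr_sumr (proj2 p_dist) mulr1.
Qed.

Lemma sum_seq_count_mem (s : seq X) (phi : X -> R) :
  \sum_(x <- s) phi x = \sum_x (count_mem x s)%:R * phi x.
Proof.
elim: s => [|y s IH]; first by rewrite big_nil big1 // => x _; rewrite mul0r.
rewrite big_cons IH; under [RHS]eq_bigr do rewrite /= natrD mulrDl.
rewrite big_split /=; congr (_ + _); rewrite (bigD1 y) //= eqxx mul1r big1 ?addr0 //.
by move=> x x_neq; rewrite eq_sym (negbTE x_neq) mul0r.
Qed.

Lemma expect_sum_seq p n (phi : X -> R) : is_dist p ->
  \sum_(tr : n.-tuple X) tp p tr * \sum_(x <- tr) phi x =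
  \sum_a EN p n a * \sum_j p j * phi (a, j).
Proof.
move=> p_dist; under eq_bigr do rewrite sum_seq_count_mem mulr_sumr.
rewrite exchange_big /=; under [RHS]eq_bigr do rewrite mulr_sumr.
rewrite [RHS]pair_bigA /=; apply: eq_bigr => x _.
rewrite mulrA mulrC -expect_count_pair // mulr_sumr; apply: eq_bigr => tr _.
by rewrite -surjective_pairing mulrA mulrC.
Qed.

Lemma sum_count_action (s : seq X) :
  \sum_i (count (fun x : X => x.1 == i) s)%:R = (size s)%:R :> R.
Proof.
elim: s => [|y s IH]; first by rewrite big1.
under eq_bigr do rewrite /= natrD.
rewrite big_split /= IH (bigD1 y.1) //= eqxx big1 => [|i i_neq]; last first.
  by rewrite eq_sym (negbTE i_neq).
by rewrite addr0 -add1n natrD.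
Qed.

Lemma sum_ENcount p n : is_dist p -> \sum_i EN p n i = n%:R.
Proof.
move=> p_dist; rewrite /ENcount exchange_big /=.
under eq_bigr do rewrite -mulr_sumr sum_count_action size_tuple.
by rewrite -mulr_suml sum_traj_prob // mul1r.
Qed.

(** * Change of measure *)

Lemma obs_dist_ge0 a (w : 'I_M -> R) s :
  (forall j, 0 <= w j) -> 0 <= obs_dist H a w s.
Proof.
move=> w_ge0; apply: sumr_ge0 => j _.
by rewrite mulr_ge0 // /sigmat mxE; case: (_ == _).
Qed.

Lemma obs_dist_ge a (w : 'I_M -> R) j :
  (forall j, 0 <= w j) -> w j <= obs_dist H a w (H a j).
Proof.
move=> w_ge0; rewrite /obs_dist (bigD1 j) //= /sigmat mxE eqxx mul1r lerDl.
by apply: sumr_ge0 => k _; rewrite mulr_ge0 // mxE; case: (_ == _).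
Qed.

Lemma sum_obs_dist a (w : 'I_M -> R) (G : 'I_A -> R) :
  \sum_j w j * G (H a j) = \sum_s obs_dist H a w s * G s.
Proof.
rewrite /obs_dist; under [RHS]eq_bigr do rewrite mulr_suml.
rewrite exchange_big /=; apply: eq_bigr => j _.
rewrite (bigD1 (H a j)) //= big1 ?addr0 => [|s s_neq].
  by rewrite /sigmat mxE eqxx mul1r.
by rewrite /sigmat mxE eq_sym (negbTE s_neq) !mul0r.
Qed.

(* Symbols that [p] never emits get ratio [x / 0 = 0]; this is why the change
   of measure below is only an inequality. *)
Definition obs_ratio (p q : 'I_M -> R) (x : X) : R :=
  obs_dist H x.1 q (H x.1 x.2) / obs_dist H x.1 p (H x.1 x.2).

Lemma obs_ratio_ge0 p q x : is_dist p -> is_dist q -> 0 <= obs_ratio p q x.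
Proof.
by move=> [p_ge0 _] [q_ge0 _]; rewrite divr_ge0 // obs_dist_ge0.
Qed.

Lemma obs_ratio_gt0 p q a j : is_dist p -> is_dist q ->
  dominated (obs_dist H a p) (obs_dist H a q) -> 0 < p j ->
  0 < obs_ratio p q (a, j).
Proof.
move=> [p_ge0 _] [q_ge0 _] /forallP /(_ (H a j)) dom pj_gt0.
have Sp_gt0 : 0 < obs_dist H a p (H a j) by apply: lt_le_trans (obs_dist_ge _ _ _).
rewrite divr_gt0 // lt_def obs_dist_ge0 // andbT.
by move: dom; rewrite Sp_gt0.
Qed.

Lemma step_change_of_measure p q h (f : 'I_N -> 'I_A -> R) :
  is_dist p -> is_dist q -> (forall a s, 0 <= f a s) ->
  \sum_x step_prob p h x * (obs_ratio p q x * f x.1 (H x.1 x.2)) <=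
  \sum_x step_prob q h x * f x.1 (H x.1 x.2).
Proof.
move=> p_dist q_dist f_ge0; rewrite /step_prob.
rewrite -(pair_bigA _ (fun a j => pol h a * p j * (obs_ratio p q (a, j) * f a (H a j)))).
rewrite -(pair_bigA _ (fun a j => pol h a * q j * f a (H a j))) /=.
apply: ler_sum => a _; under eq_bigr do rewrite -mulrA.
under [X in _ <= X]eq_bigr do rewrite -mulrA.
rewrite -!mulr_sumr; apply: ler_wpM2l; first exact: (proj1 (pol_valid h)).
rewrite (sum_obs_dist a p (fun s => obs_dist H a q s / obs_dist H a p s * f a s)).
rewrite (sum_obs_dist a q (f a)); apply: ler_sum => s _.
have [->|Sp_neq0] := eqVneq (obs_dist H a p s) 0; last first.
  by rewrite mulrA mulrCA mulfV // mulr1.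
by rewrite mul0r mulr_ge0 // obs_dist_ge0 //; case: q_dist.
Qed.

Definition lratio p q (s : seq X) : R := \prod_(x <- s) obs_ratio p q x.

Lemma change_of_measure p q n (f : seq ('I_N * 'I_A) -> R) :
  is_dist p -> is_dist q -> (forall h, 0 <= f h) ->
  \sum_(tr : n.-tuple X) tp p tr * (lratio p q tr * f (hist_of H tr)) <=
  \sum_(tr : n.-tuple X) tp q tr * f (hist_of H tr).
Proof.
move=> p_dist q_dist; elim: n f => [|n IH] f f_ge0.
  apply: ler_sum => tr _.
  by rewrite (size0nil (size_tuple tr)) /lratio big_nil mul1r /traj_prob !big_ord0.
pose g h := \sum_x step_prob p h x *
              (obs_ratio p q x * f (rcons h (x.1, H x.1 x.2))).
have g_ge0 h : 0 <= g h.
  by apply: sumr_ge0 => x _; rewrite mulr_ge0 ?step_prob_ge0 // mulr_ge0 ?obs_ratio_ge0.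
rewrite !sum_traj_probS.
rewrite (eq_bigr (fun tr => tp p tr * (lratio p q tr * g (hist_of H tr)))) => [|tr _].
  apply: le_trans (IH g g_ge0) _.
  apply: ler_sum => tr _; apply: ler_wpM2l; first exact: traj_prob_ge0.
  under [X in _ <= X]eq_bigr do rewrite /hist_of map_rcons -/(hist_of H tr).
  set h := hist_of H tr.
  exact: (step_change_of_measure h p_dist q_dist (fun a s => f_ge0 (rcons h (a, s)))).
congr (_ * _); rewrite /g mulr_sumr; apply: eq_bigr => x _.
rewrite /lratio /hist_of /= -cats1 big_cat map_cat /= big_seq1 cats1.
ring.
Qed.

Definition llr p q (s : seq X) : R := \sum_(x <- s) ln (obs_ratio p q x).

Definition played_dominated p q n : bool :=
  [forall a, (0 < EN p n a) ==> dominated (obs_dist H a p) (obs_dist H a q)].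

Definition weighted_KL p q n : R :=
  \sum_a EN p n a * KLr (obs_dist H a p) (obs_dist H a q).

Lemma traj_prob_gt0_mem p n (tr : n.-tuple X) x : is_dist p ->
  0 < tp p tr -> x \in (tr : seq X) -> 0 < p x.2 /\ 0 < EN p n x.1.
Proof.
move=> p_dist tr_gt0 /tnthP [t ->]; split.
  move/negbT: (gt_eqF tr_gt0); rewrite /traj_prob (bigD1 t) //= !mulf_eq0.
  by case/norP=> /norP [_ pt_neq0] _; rewrite lt_def pt_neq0 (proj1 p_dist).
rewrite /ENcount (bigD1 tr) //= ltr_wpDr //.
  by apply: sumr_ge0 => tr' _; rewrite mulr_ge0 ?traj_prob_ge0.
rewrite mulr_gt0 // ltr0n -has_count; apply/hasP.
by exists (tnth tr t) => //; exact: mem_tnth.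
Qed.

Lemma lratio_expR p q n (tr : n.-tuple X) : is_dist p -> is_dist q ->
  played_dominated p q n -> 0 < tp p tr -> lratio p q tr = expR (llr p q tr).
Proof.
move=> p_dist q_dist /forallP dom tr_gt0.
rewrite /lratio /llr expR_sum; apply: eq_big_seq => -[a j] x_in.
have [pj_gt0 ENa_gt0] := traj_prob_gt0_mem p_dist tr_gt0 x_in.
by rewrite lnK // posrE obs_ratio_gt0 // (implyP (dom a)).
Qed.

Lemma expect_llr p q n : is_dist p -> is_dist q -> played_dominated p q n ->
  \sum_(tr : n.-tuple X) tp p tr * llr p q tr = - weighted_KL p q n.
Proof.
move=> p_dist q_dist /forallP dom.
rewrite expect_sum_seq // /weighted_KL -sumrN; apply: eq_bigr => a _.
have [->|ENa_neq0] := eqVneq (EN p n a) 0; first by rewrite !mul0r oppr0.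
have /forallP dom_a : dominated (obs_dist H a p) (obs_dist H a q).
  by apply: (implyP (dom a)); rewrite lt_def ENa_neq0 ENcount_ge0.
rewrite -mulrN; congr (_ * _).
rewrite (sum_obs_dist a p (fun s => ln (obs_dist H a q s / obs_dist H a p s))).
rewrite /KLr -sumrN (bigID (fun s => 0 < obs_dist H a p s)) /=.
rewrite [X in _ + X]big1 ?addr0 => [|s Sp_le0]; last first.
  suff -> : obs_dist H a p s = 0 by rewrite mul0r.
  by apply/eqP; rewrite eq_le leNgt Sp_le0 obs_dist_ge0 //; case: p_dist.
apply: eq_bigr => s Sp_gt0; have /implyP/(_ Sp_gt0) Sq_neq0 := dom_a s.
have Sq_gt0 : 0 < obs_dist H a q s.
  by rewrite lt_def Sq_neq0 obs_dist_ge0 //; case: q_dist.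
by rewrite -invf_div lnV ?mulrN // posrE divr_gt0.
Qed.

Definition event_prob p n (E : pred (seq ('I_N * 'I_A))) : R :=
  \sum_(tr : n.-tuple X) tp p tr * (E (hist_of H tr))%:R.

Lemma expect_lratio_le1 p q n : is_dist p -> is_dist q ->
  \sum_(tr : n.-tuple X) tp p tr * lratio p q tr <= 1.
Proof.
move=> p_dist q_dist; rewrite -(sum_traj_prob n q_dist).
apply: (le_trans _ (le_trans (change_of_measure n p_dist q_dist (fun _ => ler01)) _)).
  by apply: ler_sum => tr _; rewrite mulr1.
by apply: ler_sum => tr _; rewrite mulr1.
Qed.

(* Off the event, [llr <= expR llr = lratio], whose expectation is at most 1. *)
Lemma expect_llr_on_event p q n (E : pred (seq ('I_N * 'I_A))) :
  is_dist p -> is_dist q -> played_dominated p q n ->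
  - (weighted_KL p q n + 1) <=
  \sum_(tr : n.-tuple X) tp p tr * (E (hist_of H tr))%:R * llr p q tr.
Proof.
move=> p_dist q_dist dom.
have off_event : \sum_(tr : n.-tuple X)
    tp p tr * ((1 - (E (hist_of H tr))%:R) * llr p q tr) <= 1.
  apply: le_trans (expect_lratio_le1 n p_dist q_dist); apply: ler_sum => tr _.
  move: (traj_prob_ge0 tr p_dist); rewrite le_eqVlt => /predU1P [<-|tr_gt0].
    by rewrite !mul0r.
  rewrite ler_pM2l // (lratio_expR p_dist q_dist dom tr_gt0); case: (E _) => /=.
    by rewrite subrr mul0r expR_ge0.
  by rewrite subr0 mul1r; apply: le_trans (expR_ge1Dx _); rewrite lerDr.
have := expect_llr p_dist q_dist dom.
rewrite (eq_bigr (fun tr => tp p tr * (E (hist_of H tr))%:R * llr p q tr +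
    tp p tr * ((1 - (E (hist_of H tr))%:R) * llr p q tr))) => [|tr _]; last by ring.
by rewrite big_split /=; lra.
Qed.

Lemma event_prob_change_of_measure p q n E : is_dist p -> is_dist q ->
  played_dominated p q n -> 0 < event_prob p n E ->
  event_prob p n E * expR (- (weighted_KL p q n + 1) / event_prob p n E) <=
  event_prob q n E.
Proof.
move=> p_dist q_dist dom P_gt0.
have w_ge0 (tr : n.-tuple X) : 0 <= tp p tr * (E (hist_of H tr))%:R.
  by rewrite mulr_ge0 ?traj_prob_ge0 ?ler0n.
apply: le_trans (change_of_measure n p_dist q_dist (fun h => ler0n _ (E h))).
have jensen := jensen_expR (fun tr : n.-tuple X => llr p q tr) w_ge0 P_gt0.
apply: (le_trans _ (le_trans jensen _)).
  rewrite ler_pM2l // ler_expR; apply: ler_wpM2r; first by rewrite invr_ge0 ltW.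
  exact: expect_llr_on_event.
apply: ler_sum => tr _.
move: (traj_prob_ge0 tr p_dist); rewrite le_eqVlt => /predU1P [<-|tr_gt0].
  by rewrite !mul0r.
by rewrite (lratio_expR p_dist q_dist dom tr_gt0) mulrAC mulrA.
Qed.

Lemma sum_ENcount_KL p q n : is_dist p ->
  (\sum_a (EN p n a)%:E * KL (obs_dist H a p) (obs_dist H a q))%E =
  if played_dominated p q n then (weighted_KL p q n)%:E else +oo%E.
Proof.
move=> p_dist; case: ifPn => [/forallP dom | /forallPn [a]].
  rewrite /weighted_KL -sumEFin; apply: eq_bigr => a _.
  have [->|ENa_neq0] := eqVneq (EN p n a) 0; first by rewrite mul0e mul0r.
  by rewrite KLE (implyP (dom a)) // lt_def ENa_neq0 ENcount_ge0.
rewrite negb_imply => /andP [ENa_gt0 not_dom].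
apply/eqP; rewrite esum_eqy => [|b _]; last first.
  rewrite KLE; case: ifP => _ //.
  have := ENcount_ge0 n b p_dist; rewrite le_eqVlt => /predU1P [<-|ENb_gt0].
    by rewrite mul0e.
  by rewrite gt0_muley ?lte_fin.
by apply/existsP; exists a; rewrite /= KLE (negbTE not_dom) gt0_muley.
Qed.

Definition majority (i : 'I_N) n : pred (seq ('I_N * 'I_A)) :=
  fun h => (n < 2 * count (fun y => y.1 == i) h)%N.

Lemma majority_hist_of i n (tr : seq X) :
  majority i n (hist_of H tr) = (n < 2 * count (fun x : X => x.1 == i) tr)%N.
Proof. by rewrite /majority /hist_of count_map. Qed.

Lemma majority_prob_ge p n i : is_dist p ->
  n%:R * (1 - event_prob p n (majority i n)) <= 2 * (n%:R - EN p n i).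
Proof.
move=> p_dist; have mass1 := sum_traj_prob n p_dist.
have -> : n%:R * (1 - event_prob p n (majority i n)) =
    \sum_(tr : n.-tuple X) tp p tr * (n%:R * (1 - (majority i n (hist_of H tr))%:R)).
  rewrite -[X in _ * (X - _)]mass1 /event_prob -sumrB mulr_sumr.
  by apply: eq_bigr => tr _; ring.
have -> : 2 * (n%:R - EN p n i) =
    \sum_(tr : n.-tuple X) tp p tr * (2 * (n%:R - (count (fun x : X => x.1 == i) tr)%:R)).
  rewrite -[n%:R in LHS]mul1r -[X in X * n%:R]mass1 mulr_suml /ENcount -sumrB mulr_sumr.
  by apply: eq_bigr => tr _; ring.
apply: ler_sum => tr _; rewrite ler_wpM2l ?traj_prob_ge0 //.
have : (count (fun x : X => x.1 == i) tr <= n)%N.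
  by rewrite -{2}(size_tuple tr) count_size.
rewrite majority_hist_of -(ler_nat R); case: ltnP => [_|] /=.
  by rewrite mulr1n; lra.
by rewrite mulr0n -(ler_nat R) natrM; lra.
Qed.

Lemma majority_prob_le q n i : is_dist q ->
  n%:R * event_prob q n (majority i n) <= 2 * EN q n i.
Proof.
move=> q_dist; rewrite /event_prob /ENcount !mulr_sumr; apply: ler_sum => tr _.
rewrite mulrCA [2 * _]mulrCA ler_wpM2l ?traj_prob_ge0 // majority_hist_of.
case: ltnP => [|_]; last by rewrite mulr0 mulr_ge0.
by rewrite -(ltr_nat R) natrM mulr1 => /ltW.
Qed.

End Trajectories.

(** * Consequences of strong consistency *)

Section Regret.
Variables (R : realType) (N M A : nat) (L : 'M[R]_(N, M)).

Lemma gap_ge0 p i : 0 <= gap L p i.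
Proof. exact: bigmax_ge_id. Qed.

Lemma gap_ge p i k : loss L i p - loss L k p <= gap L p i.
Proof. exact: (le_bigmax _ (fun k => loss L i p - loss L k p)). Qed.

Lemma gap_gt0_not_in_cell q i : is_dist q -> ~ in_cell L i q -> 0 < gap L q i.
Proof.
move=> q_dist q_out; rewrite ltNge; apply/negP => gap_le0.
by apply: q_out; split => // j _; exact: le_trans (gap_ge _ _ _) gap_le0.
Qed.

Variables (H : 'I_N -> 'I_M -> 'I_A) (pol : policy R N A).
Hypothesis pol_valid : valid_policy pol.

Local Notation EN := (ENcount H pol).

Lemma ENcount_gap_le_Eregret p n i : is_dist p ->
  EN p n i * gap L p i <= Eregret L H pol p n.
Proof.
move=> p_dist; rewrite /Eregret (bigD1 i) //= lerDl.
by apply: sumr_ge0 => k _; rewrite mulr_ge0 ?gap_ge0 ?ENcount_ge0.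
Qed.

Lemma suboptimal_count_le_Eregret p i : is_dist p ->
  (forall j, j != i -> loss L i p < loss L j p) ->
  exists2 c, 0 < c & forall n, c * (n%:R - EN p n i) <= Eregret L H pol p n.
Proof.
move=> p_dist opt.
pose c := \big[Num.min/1]_(j | j != i) (loss L j p - loss L i p).
exists c => [|n].
  rewrite /c; elim/big_ind: _ => // [x y x_gt0 y_gt0|j /opt].
    by rewrite lt_min x_gt0.
  by rewrite subr_gt0.
rewrite -(sum_ENcount H pol_valid n p_dist) (bigD1 i) //= addrAC subrr add0r.
rewrite /Eregret [X in _ <= X](bigD1 i) //= mulr_sumr ler_wpDl ?mulr_ge0 ?gap_ge0 //.
  by rewrite ENcount_ge0.
apply: ler_sum => j j_neq; rewrite mulrC ler_wpM2l ?ENcount_ge0 //.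
by apply: le_trans (gap_ge p j i); exact: bigmin_le_cond.
Qed.

Hypothesis consistent : strongly_consistent L H pol.

Lemma majority_prob_ge_eventually p i : is_dist p ->
  (forall j, j != i -> loss L i p < loss L j p) ->
  forall a, 0 < a -> exists n0, forall n, (n0 <= n)%N ->
    1 - a <= event_prob H pol p n (majority i n).
Proof.
move=> p_dist opt a a_gt0.
have [c c_gt0 c_le] := suboptimal_count_le_Eregret p_dist opt.
have ac_gt0 : 0 < a * c / 2 by rewrite divr_gt0 ?mulr_gt0.
have [n0 regret_le] := consistent p_dist ltr01 ac_gt0.
exists (maxn n0 1) => n; rewrite geq_max => /andP [n0_le n_gt0].
have n_pos : 0 < n%:R :> R by rewrite ltr0n.
have := regret_le n n0_le; rewrite powRr1 ?ler0n // => {}regret_le.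
have := majority_prob_ge H pol_valid n i p_dist.
have := c_le n; set P := event_prob _ _ _ _ _; set E := EN p n i => c_le' prob_ge.
have : n%:R * (1 - P) <= n%:R * a.
  rewrite -(ler_pM2l c_gt0); apply: le_trans (_ : c * (2 * (n%:R - E)) <= _).
    by rewrite ler_pM2l.
  by nra.
by rewrite ler_pM2l //; lra.
Qed.

Lemma majority_prob_le_eventually q i : is_dist q ->
  forall a, 0 < a -> exists n0, forall n, (n0 <= n)%N ->
    n%:R * event_prob H pol q n (majority i n) * gap L q i <= 2 * n%:R `^ a.
Proof.
move=> q_dist a a_gt0; have [n0 regret_le] := consistent q_dist a_gt0 ltr01.
exists n0 => n /regret_le; rewrite mul1r => {}regret_le.
have := majority_prob_le H pol_valid n i q_dist.
have := ENcount_gap_le_Eregret n i q_dist.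
have := gap_ge0 q i; nra.
Qed.

End Regret.

(** * Real estimates *)

Lemma ln_nat_unbounded (R : realType) (c : R) :
  exists n0, forall n, (n0 <= n)%N -> c <= ln (n%:R : R).
Proof.
exists (Num.truncn (expR c)).+1 => n n_ge.
have c_lt : expR c < n%:R by apply: lt_le_trans (truncnS_gt _) _; rewrite ler_nat.
rewrite -[c]expRK ler_ln ?ltW // posrE ?expR_gt0 //.
exact: lt_trans (expR_gt0 c) c_lt.
Qed.

Lemma ln2_le1 (R : realType) : ln 2 <= 1 :> R.
Proof. by have := @le_ln1Dx R 1; rewrite (_ : 1 + 1 = 2) //; apply; lra. Qed.

Lemma log_lower_bound (R : realType) (e g x P Q D : R) :
  0 < e -> e <= 2^-1 -> 0 < g -> 2 * (`|ln (2 / g)| + 3) / e <= ln x ->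
  1 - e / 4 <= P -> P * expR (- (D + 1) / P) <= Q ->
  x * Q * g <= 2 * x `^ (e / 4) ->
  (1 - e) * ln (x + 1) <= D.
Proof.
move=> e_gt0 e_le g_gt0 x_large P_ge PQ xQg_le.
set a := e / 4 in P_ge xQg_le; set u := ln x in x_large.
set kappa := ln (2 / g) in x_large; set K := `|kappa| in x_large.
have kappa_le : kappa <= K := ler_norm kappa.
have K_ge0 : 0 <= K := normr_ge0 kappa.
have u_large : 2 * (K + 3) <= e * u by move: x_large; rewrite ler_pdivrMr // [u * e]mulrC.
have a_pos : 0 < a by rewrite divr_gt0.
have a_small : a <= 8^-1 by rewrite /a ler_pdivrMr //; lra.
have u_gt0 : 0 < u by nra.
have x_gt1 : 1 < x by rewrite ltNge; apply: contraTN u_gt0 => /ln_le0; rewrite leNgt.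
have x_gt0 : 0 < x by lra.
have P_gt0 : 0 < P by lra.
have Q_gt0 : 0 < Q by apply: lt_le_trans PQ; rewrite mulr_gt0 ?expR_gt0.
have lnQ_le : ln Q <= kappa - (1 - a) * u.
  move: xQg_le; rewrite -ler_ln ?posrE ?mulr_gt0 ?powR_gt0 //.
  rewrite !lnM ?posrE ?mulr_gt0 ?powR_gt0 // ln_powR /kappa ln_div ?posrE //.
  by rewrite -/u mulrBl mul1r; lra.
have lnP_ge : -1 <= ln P.
  have : ln 2^-1 <= ln P by rewrite ler_ln ?posrE //; lra.
  by rewrite lnV ?posrE //; have := ln2_le1 R; lra.
have ratio_ge : (1 - a) * u - kappa - 1 <= (D + 1) / P.
  move: PQ; rewrite -ler_ln ?posrE ?mulr_gt0 ?expR_gt0 //.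
  by rewrite lnM ?posrE ?expR_gt0 // expRK mulNr; lra.
have D_ge : (1 - a) * ((1 - a) * u - kappa - 1) <= D + 1.
  apply: le_trans (_ : P * ((1 - a) * u - kappa - 1) <= _).
    by rewrite ler_wpM2r //; nra.
  by move: ratio_ge; rewrite ler_pdivlMr // mulrC.
have ln_succ_le : ln (x + 1) <= 1 + u.
  have : ln (x + 1) <= ln (2 * x) by rewrite ler_ln ?posrE //; lra.
  by rewrite lnM ?posrE // -/u; have := ln2_le1 R; lra.
(* With [a = e / 4], [(1 - a)^2 >= 1 - e / 2]: the remaining [e / 2 * ln x]
   absorbs all the constants. *)
have e_eq : e = 4 * a by rewrite /a mulrC divfK.
rewrite e_eq in u_large *; nra.
Qed.

Theorem lemma1 (R : realType) (N M A : nat) (L : 'M[R]_(N, M))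
  (H : 'I_N -> 'I_M -> 'I_A) (pstar : 'I_M -> R) (i1 : 'I_N)
  (pol : policy R N A) :
  is_dist pstar ->
  globally_observable L H ->
  (forall j : 'I_N, j != i1 -> loss L i1 pstar < loss L j pstar) ->
  valid_policy pol ->
  strongly_consistent L H pol ->
  forall q : 'I_M -> R, in_cell_compl L i1 q ->
  forall eps : R, 0 < eps ->
  exists T0 : nat, forall T : nat, (T0 <= T)%N ->
    (((1 - eps) * ln (T%:R : R))%:E <=
     \sum_(i < N) (ENcount H pol pstar T.-1 i)%:E
                  * KL (obs_dist H i pstar) (obs_dist H i q))%E.
Proof.
move=> p_dist _ opt pol_valid consistent q [q_dist q_out] eps eps_gt0.
pose e := Num.min eps 2^-1.
have e_gt0 : 0 < e by rewrite lt_min eps_gt0 invr_gt0 ltr0n.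
have e_le : e <= 2^-1 by rewrite ge_min lexx orbT.
have a_gt0 : 0 < e / 4 by rewrite divr_gt0.
have g_gt0 := gap_gt0_not_in_cell q_dist q_out.
have [n1 likely] := majority_prob_ge_eventually pol_valid consistent p_dist opt a_gt0.
have [n2 unlikely] := majority_prob_le_eventually pol_valid consistent i1 q_dist a_gt0.
have [n3 large] := ln_nat_unbounded (2 * (`|ln (2 / gap L q i1)| + 3) / e).
exists (maxn n1 (maxn n2 n3)).+1 => -[//|n].
rewrite ltnS !geq_max => /and3P [/likely P_ge /unlikely Q_le /large n_large] /=.
rewrite sum_ENcount_KL //; case: ifP => dom; last exact: leey.
rewrite lee_fin; apply: le_trans (_ : (1 - e) * ln n.+1%:R <= _).
  by rewrite ler_wpM2r ?ln_ge0 ?ler1n // lerB // ge_min lexx.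
rewrite -natr1; apply: (log_lower_bound e_gt0 e_le g_gt0 n_large P_ge _ Q_le).
by apply: event_prob_change_of_measure => //; apply: lt_le_trans P_ge; lra.
Qed.
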